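(* Let $x\in\mathbb{R}\setminus D$ with binary expansion $x=k+\sum_{n\ge1}a_n2^{-n}$ ($k\in\mathbb{Z}$, $a_n\in\{0,1\}$). Suppose $\liminf_n G_n'(x)$ and $\limsup_n G_n'(x)$ are finite and $$\limsup_n G_n'(x)-\liminf_n G_n'(x)\in\{1,2\}.$$ Then there exists $m\ge1$ such that $a_{m+2i}+a_{m+2i+1}=1$ for all $i\ge0$, and $$d_-T(x)=\liminf_n G_n'(x)+1,\qquad D^+T(x)=\limsup_n G_n'(x)-1.$$
   Context: Let $\phi(x)=\operatorname{dist}(x,\mathbb{Z})$ and $T(x)=\sum_{n=0}^\infty 2^{-n}\phi(2^nx)$ (the Takagi function). For $n\ge1$ let $D_n=\{k/2^{n-1}:k\in\mathbb{Z}\}$, $D=\bigcup_nD_n$, $g_n(x)=\operatorname{dist}(x,D_n)$, $G_n=g_1+\dots+g_n$; for $x\notin D$, $G_n'(x)$ exists and is an integer. Dini derivatives: $d_-f(x)=\liminf_{h\uparrow0}\frac{f(x+h)-f(x)}{h}$, $D^+f(x)=\limsup_{h\downarrow0}\frac{f(x+h)-f(x)}{h}$. *)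

From Stdlib Require Import Reals Lra Lia ZArith.
Open Scope R_scope.

(* phi(x) = dist(x, Z): distance from x to the nearest integer.
   Int_part x is floor x, so the two nearest integers are floor x, floor x + 1. *)
Definition phi (x : R) : R :=
  Rmin (x - IZR (Int_part x)) (IZR (Int_part x) + 1 - x).

Definition takagi_term (x : R) (n : nat) : R := phi (2 ^ n * x) / 2 ^ n.

Definition in_D (n : nat) (x : R) : Prop := exists k : Z, x = IZR k / 2 ^ (n - 1).
Definition in_Dall (x : R) : Prop := exists n : nat, (1 <= n)%nat /\ in_D n x.

(* g_n(x) = dist(x, D_n) = 2^{-(n-1)} dist(2^{n-1} x, Z). *)
Definition g (n : nat) (x : R) : R := phi (2 ^ (n - 1) * x) / 2 ^ (n - 1).

Fixpoint G (n : nat) (x : R) : R :=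
  match n with
  | O => 0
  | S m => G m x + g (S m) x
  end.

Definition is_liminf_seq (u : nat -> R) (l : R) : Prop :=
  (forall eps, eps > 0 -> exists N, forall n, (N <= n)%nat -> u n > l - eps) /\
  (forall eps, eps > 0 -> forall N, exists n, (N <= n)%nat /\ u n < l + eps).

Definition is_limsup_seq (u : nat -> R) (L : R) : Prop :=
  (forall eps, eps > 0 -> exists N, forall n, (N <= n)%nat -> u n < L + eps) /\
  (forall eps, eps > 0 -> forall N, exists n, (N <= n)%nat /\ u n > L - eps).

Definition is_lower_left_dini (f : R -> R) (x l : R) : Prop :=
  (forall eps, eps > 0 -> exists delta, delta > 0 /\
      forall h, - delta < h < 0 -> (f (x + h) - f x) / h > l - eps) /\
  (forall eps, eps > 0 -> forall delta, delta > 0 ->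
      exists h, - delta < h < 0 /\ (f (x + h) - f x) / h < l + eps).

Definition is_upper_right_dini (f : R -> R) (x L : R) : Prop :=
  (forall eps, eps > 0 -> exists delta, delta > 0 /\
      forall h, 0 < h < delta -> (f (x + h) - f x) / h < L + eps) /\
  (forall eps, eps > 0 -> forall delta, delta > 0 ->
      exists h, 0 < h < delta /\ (f (x + h) - f x) / h > L - eps).

(* Let X_n = 2^n x - p_n in (0,1) be the fractional parts of the dyadic
   rescalings of x, p_n being the integer read off the digits k, a_1..a_n;
   then X_{n+1} = 2 X_n - a_{n+1}.  Each g_{n+1} has slope 1 - 2 a_{n+1} at
   x, so G_n'(x) = W_n = sum_{i<=n} (1 - 2 a_i) is a walk with steps +-1.
   If its liminf lz and limsup differ by 1 or 2, the walk eventually stays in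
   [lz, lz + 2], and from every visit to the middle level lz + 1 on the digits
   come in complementary pairs 01 / 10.

   Of T we use only: 0 <= T <= 2/3, periodicity, evenness and the one-digit
   step T t = b + (1 - 2b) t + T(2t - b)/2.  Iterating the step gives the
   chain identity  T x - T y = W_n (x - y) + (T X_n - T Y_n) / 2^n  while both
   orbits stay in [0,1], and complementary digit pairs force T X_n = 2/3, the
   maximum.  For y = x + h left of x we stop the chain at the first n at which
   Y_{n+1} leaves [0,1]; this bounds the left difference quotient below by
   lz + 1, with equality for y chosen so that Y_n = 1/3.  The upper right Dini
   derivative follows by applying this to -x, whose digits are complemented. *)

From Stdlib Require Import Reals Lra Lia ZArith.
Open Scope R_scope.

Lemma phi_le_dist (z : R) (m : Z) : phi z <= Rabs (z - IZR m).
Proof.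
  unfold phi. destruct (base_Int_part z) as [H1 H2].
  set (I := Int_part z) in *.
  destruct (Z_le_gt_dec m I) as [Hm|Hm].
  - apply IZR_le in Hm. apply Rle_trans with (z - IZR I); [apply Rmin_l|].
    rewrite Rabs_right; lra.
  - assert (Hm' : (I + 1 <= m)%Z) by lia. apply IZR_le in Hm'. rewrite plus_IZR in Hm'.
    apply Rle_trans with (IZR I + 1 - z); [apply Rmin_r|].
    rewrite Rabs_left1; lra.
Qed.

Lemma phi_attained (z : R) : exists m : Z, phi z = Rabs (z - IZR m).
Proof.
  unfold phi. destruct (base_Int_part z) as [H1 H2].
  set (I := Int_part z) in *.
  destruct (Rle_dec (z - IZR I) (IZR I + 1 - z)) as [H|H].
  - exists I. rewrite Rmin_left by lra. rewrite Rabs_right; lra.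
  - exists (I + 1)%Z. rewrite Rmin_right by lra. rewrite plus_IZR, Rabs_left1; lra.
Qed.

Lemma phi_nonneg (z : R) : 0 <= phi z.
Proof. destruct (phi_attained z) as [m ->]. apply Rabs_pos. Qed.

Lemma phi_shift_int (z : R) (m : Z) : phi (z + IZR m) = phi z.
Proof.
  apply Rle_antisym.
  - destruct (phi_attained z) as [m0 ->].
    replace (z - IZR m0) with (z + IZR m - IZR (m0 + m)) by (rewrite plus_IZR; ring).
    apply phi_le_dist.
  - destruct (phi_attained (z + IZR m)) as [m1 ->].
    replace (z + IZR m - IZR m1) with (z - IZR (m1 - m)) by (rewrite minus_IZR; ring).
    apply phi_le_dist.
Qed.

Lemma phi_opp (z : R) : phi (- z) = phi z.
Proof.
  assert (Hle : forall w, phi (- w) <= phi w).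
  { intros w. destruct (phi_attained w) as [m ->].
    replace (Rabs (w - IZR m)) with (Rabs (- w - IZR (- m)))
      by (rewrite opp_IZR, <- Rabs_Ropp; f_equal; ring).
    apply phi_le_dist. }
  apply Rle_antisym; [apply Hle|]. rewrite <- (Ropp_involutive z) at 1. apply Hle.
Qed.

Lemma phi_unit_interval (t : R) : 0 <= t <= 1 -> phi t = Rmin t (1 - t).
Proof.
  intros Ht. apply Rle_antisym.
  - apply Rmin_glb.
    + replace t with (Rabs (t - IZR 0)) at 2 by (rewrite Rabs_right; simpl; lra).
      apply phi_le_dist.
    + replace (1 - t) with (Rabs (t - IZR 1)) by (rewrite Rabs_left1; simpl; lra).
      apply phi_le_dist.
  - destruct (phi_attained t) as [m ->].
    destruct (Z_le_gt_dec m 0) as [Hm|Hm].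
    + apply IZR_le in Hm. apply Rle_trans with t; [apply Rmin_l|].
      rewrite Rabs_right; simpl in *; lra.
    + assert (Hm' : (1 <= m)%Z) by lia. apply IZR_le in Hm'.
      apply Rle_trans with (1 - t); [apply Rmin_r|]. rewrite Rabs_left1; lra.
Qed.

Lemma phi_digit (t : R) (b : nat) :
  (b = 0 \/ b = 1)%nat -> 0 <= 2 * t - INR b <= 1 -> phi t = INR b + (1 - 2 * INR b) * t.
Proof.
  intros [-> | ->] Ht; simpl INR in *; rewrite phi_unit_interval by lra.
  - rewrite Rmin_left; lra.
  - rewrite Rmin_right; lra.
Qed.

Lemma phi_plus_half_double (y : R) : phi y + phi (2 * y) / 2 <= 1 / 2.
Proof.
  destruct (base_Int_part y) as [H1 H2]. set (I := Int_part y) in *.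
  assert (HA := phi_le_dist (2 * y) (2 * I + 1)). rewrite plus_IZR, mult_IZR in HA. simpl in HA.
  destruct (Rle_dec (y - IZR I) (1 / 2)).
  - assert (HB := phi_le_dist y I). rewrite Rabs_right in HB by lra.
    rewrite Rabs_left1 in HA by lra. lra.
  - assert (HB := phi_le_dist y (I + 1)). rewrite plus_IZR in HB.
    rewrite Rabs_left1 in HB by (simpl; lra). rewrite Rabs_right in HA by lra. simpl in HB. lra.
Qed.

Lemma phi_le_half (z : R) : phi z <= 1 / 2.
Proof. assert (H := phi_plus_half_double z). assert (H0 := phi_nonneg (2 * z)). lra. Qed.

Lemma takagi_sum_shift (y : R) (n : nat) :
  sum_f_R0 (takagi_term y) (S n) = phi y + sum_f_R0 (takagi_term (2 * y)) n / 2.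
Proof.
  assert (Hterm : forall j, takagi_term y (S j) = takagi_term (2 * y) j / 2).
  { intros j. unfold takagi_term. simpl.
    replace (2 * 2 ^ j * y) with (2 ^ j * (2 * y)) by ring.
    assert (0 < 2 ^ j) by (apply pow_lt; lra). field. lra. }
  induction n.
  - simpl. rewrite Hterm. unfold takagi_term. simpl. rewrite !Rmult_1_l. field.
  - change (sum_f_R0 (takagi_term y) (S (S n)))
      with (sum_f_R0 (takagi_term y) (S n) + takagi_term y (S (S n))).
    change (sum_f_R0 (takagi_term (2 * y)) (S n))
      with (sum_f_R0 (takagi_term (2 * y)) n + takagi_term (2 * y) (S n)).
    rewrite IHn, Hterm. field.
Qed.

(* Every Takagi partial sum lies in [0, 2/3]; the upper bound comes from
   grouping the terms in pairs (phi_plus_half_double). *)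
Lemma takagi_sum_bounds (n : nat) (y : R) : 0 <= sum_f_R0 (takagi_term y) n <= 2 / 3.
Proof.
  split.
  - apply cond_pos_sum. intros j. unfold takagi_term, Rdiv.
    apply Rmult_le_pos; [apply phi_nonneg|]. left; apply Rinv_0_lt_compat, pow_lt; lra.
  - revert y. cut (forall y, sum_f_R0 (takagi_term y) n <= 2 / 3 /\
                             sum_f_R0 (takagi_term y) (S n) <= 2 / 3).
    { intros H y. apply H. }
    induction n as [|n IH]; intros y.
    + assert (H0 : forall z, takagi_term z 0 = phi z)
        by (intros z; unfold takagi_term; simpl; rewrite Rmult_1_l; field).
      rewrite takagi_sum_shift. simpl. rewrite !H0.
      assert (H1 := phi_le_half y). assert (H2 := phi_plus_half_double y). split; lra.
    + split; [apply IH|]. rewrite !takagi_sum_shift.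
      assert (H1 := proj1 (IH (2 * (2 * y)))). assert (H2 := phi_plus_half_double y). lra.
Qed.

Lemma infinite_sum_bounds (f : nat -> R) (s lo hi : R) (N : nat) :
  infinite_sum f s -> (forall n, (N <= n)%nat -> lo <= sum_f_R0 f n <= hi) -> lo <= s <= hi.
Proof.
  intros Hs Hb. split.
  - destruct (Rle_dec lo s) as [|Hn]; [auto|]. exfalso.
    destruct (Hs (lo - s)) as [M HM]; [lra|].
    assert (H1 := HM (max M N) (Nat.le_max_l _ _)).
    assert (H2 := Hb (max M N) (Nat.le_max_r _ _)).
    unfold R_dist in H1. apply Rabs_def2 in H1. lra.
  - destruct (Rle_dec s hi) as [|Hn]; [auto|]. exfalso.
    destruct (Hs (s - hi)) as [M HM]; [lra|].
    assert (H1 := HM (max M N) (Nat.le_max_l _ _)).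
    assert (H2 := Hb (max M N) (Nat.le_max_r _ _)).
    unfold R_dist in H1. apply Rabs_def2 in H1. lra.
Qed.

Section Takagi.

Variable T : R -> R.
Hypothesis HT : forall y : R, infinite_sum (takagi_term y) (T y).

Lemma takagi_bounds (y : R) : 0 <= T y <= 2 / 3.
Proof. apply (infinite_sum_bounds _ _ _ _ 0 (HT y)). intros n _. apply takagi_sum_bounds. Qed.

Lemma takagi_functional (y : R) : T y = phi y + T (2 * y) / 2.
Proof.
  apply (uniqueness_sum (takagi_term y)); [apply HT|].
  intros eps Heps. destruct (HT (2 * y) (2 * eps)) as [M HM]; [lra|].
  exists (S M). intros n Hn. destruct n as [|n]; [lia|].
  rewrite takagi_sum_shift. assert (H := HM n ltac:(lia)). unfold R_dist in *.
  replace (phi y + sum_f_R0 (takagi_term (2 * y)) n / 2 - (phi y + T (2 * y) / 2))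
    with ((sum_f_R0 (takagi_term (2 * y)) n - T (2 * y)) * / 2) by field.
  rewrite Rabs_mult, (Rabs_right (/ 2)) by lra. lra.
Qed.

Lemma takagi_ext (y z : R) : (forall j, takagi_term y j = takagi_term z j) -> T y = T z.
Proof.
  intros H. apply (uniqueness_sum (takagi_term y)); [apply HT|].
  intros eps Heps. destruct (HT z eps Heps) as [M HM]. exists M. intros n Hn.
  rewrite (sum_eq _ _ n (fun j _ => H j)). auto.
Qed.

Lemma takagi_shift_int (y : R) (m : Z) : T (y + IZR m) = T y.
Proof.
  apply takagi_ext. intros j. unfold takagi_term. f_equal.
  replace (2 ^ j * (y + IZR m)) with (2 ^ j * y + IZR (2 ^ Z.of_nat j * m)).
  - apply phi_shift_int.
  - rewrite mult_IZR, <- pow_IZR. simpl. ring.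
Qed.

Lemma takagi_even (y : R) : T (- y) = T y.
Proof.
  apply takagi_ext. intros j. unfold takagi_term. f_equal.
  replace (2 ^ j * - y) with (- (2 ^ j * y)) by ring. apply phi_opp.
Qed.

(* One binary digit b of t: if 2t - b lies in [0,1] then
   T t = b + (1 - 2b) t + T(2t - b)/2.  This is the shift of the binary
   expansion, and the only way T is unfolded below. *)
Lemma takagi_digit_step (t : R) (b : nat) :
  (b = 0 \/ b = 1)%nat -> 0 <= 2 * t - INR b <= 1 ->
  T t = INR b + (1 - 2 * INR b) * t + T (2 * t - INR b) / 2.
Proof.
  intros Hb Ht. rewrite takagi_functional, (phi_digit t b Hb Ht).
  rewrite <- (takagi_shift_int (2 * t - INR b) (Z.of_nat b)), <- INR_IZR_INZ.
  replace (2 * t - INR b + INR b) with (2 * t) by ring. reflexivity.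
Qed.

(* The value at 1/3 = 0.0101..._2 is the maximum 2/3. *)
Lemma takagi_one_third : T (1 / 3) = 2 / 3.
Proof.
  assert (H1 := takagi_digit_step (1 / 3) 0 ltac:(lia) ltac:(simpl; lra)).
  assert (H2 := takagi_digit_step (2 / 3) 1 ltac:(lia) ltac:(simpl; lra)).
  simpl INR in *.
  replace (2 * (1 / 3) - 0) with (2 / 3) in H1 by field.
  replace (2 * (2 / 3) - 1) with (1 / 3) in H2 by field. lra.
Qed.

(* Two complementary digits scale T towards its maximum by a factor 4:
   T t - 2/3 = (T t'' - 2/3) / 4 where t'' = 4t - 2b1 - b2. *)
Lemma takagi_pair_step (t : R) (b1 b2 : nat) :
  (b1 + b2 = 1)%nat -> 0 <= 2 * t - INR b1 <= 1 ->
  0 <= 2 * (2 * t - INR b1) - INR b2 <= 1 ->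
  T t = 1 / 2 + T (2 * (2 * t - INR b1) - INR b2) / 4.
Proof.
  intros Hb H1 H2.
  rewrite (takagi_digit_step t b1 ltac:(lia) H1), (takagi_digit_step _ b2 ltac:(lia) H2).
  assert (Hc : (b1 = 0 /\ b2 = 1 \/ b1 = 1 /\ b2 = 0)%nat) by lia.
  destruct Hc as [[-> ->]|[-> ->]]; simpl INR; field.
Qed.

(* T b + b <= 4/3 on [0,1], the bound used when the walk W sits at the top of its band. *)
Lemma takagi_plus_id_le (b : R) : 0 <= b <= 1 -> T b + b <= 4 / 3.
Proof.
  intros Hb. destruct (Rle_dec b (1 / 2)).
  - assert (H := takagi_bounds b). lra.
  - rewrite (takagi_digit_step b 1) by (simpl; lia || lra). simpl INR.
    assert (H := takagi_bounds (2 * b - 1)). lra.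
Qed.

End Takagi.

Lemma pow2_eventually_large (r : R) (N : nat) :
  exists j : nat, (N <= j)%nat /\ forall i, (j <= i)%nat -> r < 2 ^ i.
Proof.
  destruct (Pow_x_infinity 2 ltac:(rewrite Rabs_right; lra) (r + 1)) as [j Hj].
  exists (max j N). split; [lia|]. intros i Hi.
  assert (H := Hj i ltac:(lia)). rewrite Rabs_right in H by (left; apply pow_lt; lra). lra.
Qed.

Lemma geometric_null (e c : R) : (forall i : nat, Rabs e <= c / 4 ^ i) -> e = 0.
Proof.
  intros H. destruct (Req_dec e 0) as [|Hne]; auto. exfalso.
  assert (He : 0 < Rabs e) by (apply Rabs_pos_lt; auto).
  destruct (pow2_eventually_large (c / Rabs e) 0) as [j [_ Hj]].
  assert (Hcj := Hj j (le_n j)).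
  assert (H2j : 0 < 2 ^ j) by (apply pow_lt; lra).
  assert (H4j : 2 ^ j <= 4 ^ j) by (apply pow_incr; lra).
  assert (Hej := H j).
  apply (Rmult_le_compat_r (4 ^ j)) in Hej; [|lra].
  unfold Rdiv in Hej. rewrite Rmult_assoc, Rinv_l in Hej by lra.
  apply (Rmult_lt_compat_r (Rabs e)) in Hcj; [|exact He].
  unfold Rdiv in Hcj. rewrite Rmult_assoc, Rinv_l in Hcj by lra.
  assert (Rabs e * 2 ^ j <= Rabs e * 4 ^ j) by (apply Rmult_le_compat_l; lra).
  lra.
Qed.

Lemma first_sign_change (f : nat -> R) (N k : nat) :
  0 <= f N -> f (N + k)%nat < 0 -> exists n, (N <= n)%nat /\ 0 <= f n /\ f (S n) < 0.
Proof.
  revert N. induction k as [|k IH]; intros N H0 H1.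
  - rewrite Nat.add_0_r in H1. lra.
  - destruct (Rle_dec 0 (f (S N))) as [H|H].
    + destruct (IH (S N) H) as [n [Hn1 Hn2]].
      { replace (S N + k)%nat with (N + S k)%nat by lia. exact H1. }
      exists n. split; [lia|exact Hn2].
    + exists N. split; [lia|]. split; [exact H0|lra].
Qed.

(* The integer part p_n of 2^n x, read off the integer part k and the
   binary digits a_1, ..., a_n of x. *)
Fixpoint binary_floor (k : Z) (a : nat -> nat) (n : nat) : Z :=
  match n with
  | O => k
  | S m => (2 * binary_floor k a m + Z.of_nat (a (S m)))%Z
  end.

(* Y_n = 2^n y - p_n; for y = x this is the fractional part of 2^n x, and for
   nearby y it tracks how far y drifts from the dyadic interval of x. *)
Definition orbit (k : Z) (a : nat -> nat) (y : R) (n : nat) : R :=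
  2 ^ n * y - IZR (binary_floor k a n).

(* W_n = sum_{i=1}^n (1 - 2 a_i): a walk with steps +-1, the slope of G_n at x. *)
Fixpoint slope (a : nat -> nat) (n : nat) : Z :=
  match n with
  | O => 0%Z
  | S m => (slope a m + 1 - 2 * Z.of_nat (a (S m)))%Z
  end.

Lemma orbit_step (k : Z) (a : nat -> nat) (y : R) (n : nat) :
  orbit k a y (S n) = 2 * orbit k a y n - INR (a (S n)).
Proof. unfold orbit. cbn [binary_floor pow]. rewrite plus_IZR, mult_IZR, <- INR_IZR_INZ. ring. Qed.

Lemma orbit_translate (k : Z) (a : nat -> nat) (y h : R) (n : nat) :
  orbit k a (y + h) n = orbit k a y n + 2 ^ n * h.
Proof. unfold orbit. ring. Qed.

Lemma slope_step_real (a : nat -> nat) (n : nat) :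
  IZR (slope a (S n)) = IZR (slope a n) + (1 - 2 * INR (a (S n))).
Proof. cbn [slope]. rewrite minus_IZR, plus_IZR, mult_IZR, <- INR_IZR_INZ. ring. Qed.

Section Chain.

Variable T : R -> R.
Hypothesis HT : forall y : R, infinite_sum (takagi_term y) (T y).
Variables (k : Z) (a : nat -> nat).
Hypothesis Hdigit : forall n, a (S n) = 0%nat \/ a (S n) = 1%nat.

Lemma orbit_unit_back (y : R) (n : nat) :
  0 <= orbit k a y (S n) <= 1 -> 0 <= orbit k a y n <= 1.
Proof.
  rewrite orbit_step. destruct (Hdigit n) as [-> | ->]; simpl INR; lra.
Qed.

Lemma takagi_chain (x y : R) (n : nat) :
  0 <= orbit k a x n <= 1 -> 0 <= orbit k a y n <= 1 ->
  T x - T y = IZR (slope a n) * (x - y) + (T (orbit k a x n) - T (orbit k a y n)) / 2 ^ n.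
Proof.
  induction n as [|n IH]; intros Hx Hy.
  - unfold orbit. simpl.
    rewrite <- (takagi_shift_int T HT (1 * x - IZR k) k), <- (takagi_shift_int T HT (1 * y - IZR k) k).
    replace (1 * x - IZR k + IZR k) with x by ring.
    replace (1 * y - IZR k + IZR k) with y by ring. field.
  - rewrite (IH (orbit_unit_back x n Hx) (orbit_unit_back y n Hy)).
    assert (Hb : (a (S n) = 0 \/ a (S n) = 1)%nat) by apply Hdigit.
    rewrite orbit_step in Hx, Hy.
    rewrite (takagi_digit_step T HT (orbit k a x n) _ Hb Hx).
    rewrite (takagi_digit_step T HT (orbit k a y n) _ Hb Hy).
    rewrite slope_step_real, !orbit_step.
    assert (Hd : orbit k a x n - orbit k a y n = 2 ^ n * (x - y)) by (unfold orbit; ring).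
    assert (0 < 2 ^ n) by (apply pow_lt; lra).
    simpl pow. replace (orbit k a y n) with (orbit k a x n - 2 ^ n * (x - y)) by lra.
    field. lra.
Qed.

Lemma takagi_alternating (x : R) (j : nat) :
  (forall n, 0 <= orbit k a x n <= 1) ->
  (forall i, (a (S (j + 2 * i)) + a (S (S (j + 2 * i))))%nat = 1%nat) ->
  T (orbit k a x j) = 2 / 3.
Proof.
  intros Hx Hpair.
  assert (Hstep : forall i, T (orbit k a x (j + 2 * i)) = 1 / 2 + T (orbit k a x (j + 2 * S i)) / 4).
  { intros i. replace (j + 2 * S i)%nat with (S (S (j + 2 * i))) by lia.
    rewrite !orbit_step. apply (takagi_pair_step T HT _ _ _ (Hpair i)).
    - rewrite <- orbit_step. apply Hx.
    - rewrite <- !orbit_step. apply Hx. }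
  assert (Hscale : forall i, T (orbit k a x j) - 2 / 3 = (T (orbit k a x (j + 2 * i)) - 2 / 3) / 4 ^ i).
  { induction i as [|i IH].
    - rewrite Nat.add_0_r. simpl. field.
    - rewrite IH, (Hstep i). simpl. field. apply pow_nonzero. lra. }
  enough (T (orbit k a x j) - 2 / 3 = 0) by lra.
  apply (geometric_null _ (2 / 3)). intros i. rewrite (Hscale i).
  assert (H4 : 0 < 4 ^ i) by (apply pow_lt; lra).
  unfold Rdiv at 1. rewrite Rabs_mult, (Rabs_right (/ 4 ^ i)) by (left; apply Rinv_0_lt_compat; lra).
  apply Rmult_le_compat_r; [left; apply Rinv_0_lt_compat; lra|].
  assert (B := takagi_bounds T HT (orbit k a x (j + 2 * i))). apply Rabs_le. lra.
Qed.

End Chain.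

Section LeftDini.

Variable T : R -> R.
Hypothesis HT : forall y : R, infinite_sum (takagi_term y) (T y).
Variables (k : Z) (a : nat -> nat) (x : R).
Hypothesis Hdigit : forall n, a (S n) = 0%nat \/ a (S n) = 1%nat.
Hypothesis Horbit : forall n, 0 < orbit k a x n < 1.
Variables (lz : Z) (N : nat).
Hypothesis Hband : forall n, (N <= n)%nat -> (lz <= slope a n <= lz + 2)%Z.
Hypothesis Hbottom_often : forall M, exists n, (M <= n)%nat /\ slope a n = lz.

Lemma slope_middle_two_steps (j : nat) :
  (N <= j)%nat -> slope a j = (lz + 1)%Z ->
  slope a (S (S j)) = (lz + 1)%Z /\ (a (S j) + a (S (S j)))%nat = 1%nat.
Proof.
  intros Hj HWj.
  assert (B1 := Hband (S j) ltac:(lia)). assert (B2 := Hband (S (S j)) ltac:(lia)).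
  cbn [slope] in B1, B2 |- *.
  destruct (Hdigit j) as [A1|A1]; destruct (Hdigit (S j)) as [A2|A2];
    rewrite A1, A2 in *; simpl Z.of_nat in *; split; lia.
Qed.

Lemma digits_alternate_from_middle (j : nat) :
  (N <= j)%nat -> slope a j = (lz + 1)%Z ->
  forall i, (a (S (j + 2 * i)) + a (S (S (j + 2 * i))))%nat = 1%nat.
Proof.
  intros Hj HWj.
  assert (Hmid : forall i, slope a (j + 2 * i) = (lz + 1)%Z).
  { induction i as [|i IH]; [rewrite Nat.add_0_r; exact HWj|].
    replace (j + 2 * S i)%nat with (S (S (j + 2 * i))) by lia.
    apply (slope_middle_two_steps (j + 2 * i) ltac:(lia) IH). }
  intros i. apply (slope_middle_two_steps (j + 2 * i) ltac:(lia) (Hmid i)).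
Qed.

Lemma middle_before_bottom (M : nat) :
  exists n, (M <= n)%nat /\ (N <= n)%nat /\ slope a n = (lz + 1)%Z /\ a (S n) = 1%nat.
Proof.
  destruct (Hbottom_often (S (max M N))) as [[|n] [Hn HWn]]; [lia|].
  assert (B := Hband n ltac:(lia)). cbn [slope] in HWn.
  exists n. destruct (Hdigit n) as [A|A]; rewrite A in HWn; simpl Z.of_nat in HWn;
    [lia|repeat split; lia].
Qed.

Lemma orbit_closed (n : nat) : 0 <= orbit k a x n <= 1.
Proof. assert (H := Horbit n). lra. Qed.

(* At the middle level the rest of the expansion alternates, so T X_n = 2/3. *)
Lemma takagi_orbit_middle (n : nat) :
  (N <= n)%nat -> slope a n = (lz + 1)%Z -> T (orbit k a x n) = 2 / 3.
Proof.
  intros Hn HWn. apply (takagi_alternating T HT k a x n orbit_closed).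
  exact (digits_alternate_from_middle n Hn HWn).
Qed.

Lemma takagi_orbit_top (n : nat) :
  (N <= n)%nat -> slope a n = (lz + 2)%Z ->
  a (S n) = 1%nat /\ T (orbit k a x n) = 4 / 3 - orbit k a x n.
Proof.
  intros Hn HWn. assert (B := Hband (S n) ltac:(lia)). cbn [slope] in B.
  assert (Ha : a (S n) = 1%nat)
    by (destruct (Hdigit n) as [A|A]; rewrite A in B; simpl Z.of_nat in B; [lia|exact A]).
  split; [exact Ha|].
  assert (Hmid : slope a (S n) = (lz + 1)%Z) by (cbn [slope]; rewrite Ha; simpl Z.of_nat; lia).
  assert (Hstep := orbit_closed (S n)). rewrite orbit_step in Hstep.
  rewrite (takagi_digit_step T HT _ _ (Hdigit n) Hstep), <- orbit_step.
  rewrite (takagi_orbit_middle (S n) ltac:(lia) Hmid), Ha. simpl INR. lra.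
Qed.

(* Before a down-step, the excess W_n - (lz + 1) of the slope over the
   claimed Dini derivative compensates the possible drop from T X_n to T Y. *)
Lemma slope_excess_compensates (n : nat) (Y : R) :
  (N <= n)%nat -> a (S n) = 1%nat -> 0 <= Y <= 1 ->
  0 <= (IZR (slope a n) - (IZR lz + 1)) * (orbit k a x n - Y) + T (orbit k a x n) - T Y.
Proof.
  intros Hn Ha HY. assert (B := Hband (S n) ltac:(lia)). assert (B0 := Hband n Hn).
  cbn [slope] in B. rewrite Ha in B. simpl Z.of_nat in B.
  destruct (Z.eq_dec (slope a n) (lz + 1)) as [Hmid|Htop].
  - rewrite Hmid, plus_IZR, (takagi_orbit_middle n Hn Hmid).
    assert (TY := takagi_bounds T HT Y). simpl IZR. lra.
  - assert (Htop' : slope a n = (lz + 2)%Z) by lia.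
    destruct (takagi_orbit_top n Hn Htop') as [_ TX].
    rewrite Htop', plus_IZR, TX. assert (TY := takagi_plus_id_le T HT Y HY). simpl IZR. lra.
Qed.

(* For y = x + h slightly left of x, the orbit Y starts in [0,1] at time N
   (as Y_N > 0) and eventually becomes negative, so it leaves [0,1] at some
   first time n + 1 >= N + 1; necessarily through a digit a_{n+1} = 1. *)
Lemma left_exit_time (h : R) :
  - (orbit k a x N / 2 ^ N) < h < 0 ->
  exists n, (N <= n)%nat /\ 0 <= orbit k a (x + h) n <= 1 /\ a (S n) = 1%nat.
Proof.
  intros [Hh1 Hh2].
  assert (HpN : 0 < 2 ^ N) by (apply pow_lt; lra).
  assert (HYN : 0 <= orbit k a (x + h) N).
  { rewrite orbit_translate.
    apply (Rmult_lt_compat_l (2 ^ N)) in Hh1; [|exact HpN].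
    replace (2 ^ N * - (orbit k a x N / 2 ^ N)) with (- orbit k a x N) in Hh1 by (field; lra).
    lra. }
  destruct (pow2_eventually_large (/ - h) N) as [j [Hj1 Hj2]].
  assert (HYj : orbit k a (x + h) (N + (j - N)) < 0).
  { replace (N + (j - N))%nat with j by lia. rewrite orbit_translate.
    assert (H1 := Hj2 j (le_n _)). assert (H2 := Horbit j).
    apply (Rmult_lt_compat_r (- h)) in H1; [|lra].
    rewrite Rinv_l in H1 by lra. lra. }
  destruct (first_sign_change (orbit k a (x + h)) N (j - N) HYN HYj) as [n [Hn [HYn HYn1]]].
  exists n. split; [exact Hn|split; [split; [exact HYn|]|]].
  - rewrite orbit_translate. assert (H := Horbit n).
    assert (0 < 2 ^ n * - h) by (apply Rmult_lt_0_compat; [apply pow_lt|]; lra). lra.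
  - rewrite orbit_step in HYn1. destruct (Hdigit n) as [A|A]; rewrite A in HYn1; [|exact A].
    simpl INR in HYn1. lra.
Qed.

(* Left difference quotients near x are at least lz + 1: run the chain
   identity up to the exit time and use slope_excess_compensates. *)
Lemma left_quotient_ge (h : R) :
  - (orbit k a x N / 2 ^ N) < h < 0 -> (T (x + h) - T x) / h >= IZR lz + 1.
Proof.
  intros Hh. destruct (left_exit_time h Hh) as [n [Hn [HY Ha]]].
  assert (Hpn : 0 < 2 ^ n) by (apply pow_lt; lra).
  assert (Hchain := takagi_chain T HT k a Hdigit x (x + h) n (orbit_closed n) HY).
  assert (Hexc := slope_excess_compensates n _ Hn Ha HY).
  assert (HXY : - h = (orbit k a x n - orbit k a (x + h) n) / 2 ^ n)
    by (rewrite orbit_translate; field; lra).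
  assert (Hgain : (IZR lz + 1) * - h <= T x - T (x + h)).
  { rewrite Hchain. replace (x - (x + h)) with (- h) by ring. rewrite HXY.
    apply (Rmult_le_reg_r (2 ^ n)); [exact Hpn|].
    field_simplify; [|lra|lra]. lra. }
  apply Rle_ge. apply (Rmult_le_reg_r (- h)); [lra|].
  replace ((T (x + h) - T x) / h * - h) with (T x - T (x + h)) by (field; lra). lra.
Qed.

(* The bound lz + 1 is attained arbitrarily close to x: when X_n is at the
   middle level before a down-step, take y with Y_n = 1/3, where T is maximal. *)
Lemma left_quotient_attained (delta : R) :
  0 < delta -> exists h, - delta < h < 0 /\ (T (x + h) - T x) / h = IZR lz + 1.
Proof.
  intros Hdelta.
  destruct (pow2_eventually_large (/ delta) 0) as [M [_ HM]].
  destruct (middle_before_bottom M) as [n [HMn [HNn [Hmid Ha]]]].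
  assert (Hpn : 0 < 2 ^ n) by (apply pow_lt; lra).
  assert (HXn : 1 / 2 < orbit k a x n < 1).
  { assert (H := Horbit (S n)). rewrite orbit_step, Ha in H. simpl INR in H.
    assert (H' := Horbit n). lra. }
  set (h := (1 / 3 - orbit k a x n) / 2 ^ n).
  assert (Hh : h < 0) by (unfold h; apply Rdiv_neg_pos; lra).
  exists h. split; [split; [|exact Hh]|].
  - assert (Hbig : 1 < delta * 2 ^ n).
    { assert (H := HM n HMn).
      apply (Rmult_lt_compat_l delta) in H; [|exact Hdelta]. rewrite Rinv_r in H; lra. }
    apply (Rmult_lt_reg_r (2 ^ n)); [exact Hpn|].
    unfold h. replace ((1 / 3 - orbit k a x n) / 2 ^ n * 2 ^ n) with (1 / 3 - orbit k a x n)
      by (field; lra). lra.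
  - assert (HYn : orbit k a (x + h) n = 1 / 3)
      by (rewrite orbit_translate; unfold h; field; lra).
    assert (Hchain := takagi_chain T HT k a Hdigit x (x + h) n (orbit_closed n)
                        ltac:(rewrite HYn; lra)).
    rewrite HYn, (takagi_orbit_middle n HNn Hmid), (takagi_one_third T HT), Hmid, plus_IZR in Hchain.
    simpl IZR in Hchain.
    apply (Rmult_eq_reg_r h); [|lra].
    replace ((T (x + h) - T x) / h * h) with (T (x + h) - T x) by (field; lra). lra.
Qed.

Lemma lower_left_dini_from_band : is_lower_left_dini T x (IZR lz + 1).
Proof.
  split.
  - intros eps Heps. exists (orbit k a x N / 2 ^ N). split.
    + apply Rdiv_lt_0_compat; [apply Horbit|apply pow_lt; lra].
    + intros h Hh. assert (H := left_quotient_ge h Hh). lra.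
  - intros eps Heps delta Hdelta.
    destruct (left_quotient_attained delta Hdelta) as [h [Hh Hq]].
    exists h. split; [exact Hh|lra].
Qed.

Lemma digits_eventually_alternate :
  exists m : nat, (1 <= m)%nat /\ forall i, (a (m + 2 * i) + a (m + 2 * i + 1))%nat = 1%nat.
Proof.
  destruct (middle_before_bottom 0) as [n [_ [HNn [Hmid _]]]].
  exists (S n). split; [lia|]. intros i.
  replace (S n + 2 * i)%nat with (S (n + 2 * i)) by lia.
  replace (S (n + 2 * i) + 1)%nat with (S (S (n + 2 * i))) by lia.
  exact (digits_alternate_from_middle n HNn Hmid i).
Qed.

End LeftDini.

(* Reflection x -> -x complements the binary digits, ... *)
Definition complement_digits (a : nat -> nat) (n : nat) : nat := (1 - a n)%nat.

Section Reflection.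

Variables (k : Z) (a : nat -> nat).
Hypothesis Hdigit : forall n, a (S n) = 0%nat \/ a (S n) = 1%nat.

Lemma complement_digits_01 (n : nat) :
  complement_digits a (S n) = 0%nat \/ complement_digits a (S n) = 1%nat.
Proof. unfold complement_digits. destruct (Hdigit n) as [-> | ->]; auto. Qed.

Lemma orbit_reflect (y : R) (n : nat) :
  orbit (- k - 1) (complement_digits a) (- y) n = 1 - orbit k a y n.
Proof.
  assert (Hfloor : binary_floor (- k - 1) (complement_digits a) n = (- binary_floor k a n - 1)%Z).
  { induction n as [|n IH]; [reflexivity|]. cbn [binary_floor]. rewrite IH.
    unfold complement_digits. destruct (Hdigit n) as [-> | ->]; simpl Z.of_nat; lia. }
  unfold orbit. rewrite Hfloor, minus_IZR, opp_IZR. simpl IZR. ring.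
Qed.

Lemma slope_reflect (n : nat) : slope (complement_digits a) n = (- slope a n)%Z.
Proof.
  induction n as [|n IH]; [reflexivity|]. cbn [slope]. rewrite IH.
  unfold complement_digits. destruct (Hdigit n) as [-> | ->]; simpl Z.of_nat; lia.
Qed.

End Reflection.

Lemma dini_reflect (f : R -> R) (Heven : forall y, f (- y) = f y) (x c : R) :
  is_lower_left_dini f (- x) c -> is_upper_right_dini f x (- c).
Proof.
  assert (Hq : forall h, h <> 0 ->
            (f (- x + - h) - f (- x)) / - h = - ((f (x + h) - f x) / h)).
  { intros h Hh. replace (- x + - h) with (- (x + h)) by ring. rewrite !Heven. field. lra. }
  intros [H1 H2]. split.
  - intros eps Heps. destruct (H1 eps Heps) as [delta [Hd H]]. exists delta. split; [exact Hd|].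
    intros h Hh. assert (Q := H (- h) ltac:(lra)). rewrite Hq in Q by lra. lra.
  - intros eps Heps delta Hd. destruct (H2 eps Heps delta Hd) as [h [Hh Q]].
    exists (- h). split; [lra|]. rewrite <- (Ropp_involutive h), Hq in Q by lra. lra.
Qed.

Lemma upper_right_dini_from_band (T : R -> R)
  (HT : forall y : R, infinite_sum (takagi_term y) (T y))
  (k : Z) (a : nat -> nat) (x : R)
  (Hdigit : forall n, a (S n) = 0%nat \/ a (S n) = 1%nat)
  (Horbit : forall n, 0 < orbit k a x n < 1) (Lz : Z) (N : nat)
  (Hband : forall n, (N <= n)%nat -> (Lz - 2 <= slope a n <= Lz)%Z)
  (Htop_often : forall M, exists n, (M <= n)%nat /\ slope a n = Lz) :
  is_upper_right_dini T x (IZR Lz - 1).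
Proof.
  assert (Horbit' : forall n, 0 < orbit (- k - 1) (complement_digits a) (- x) n < 1).
  { intros n. rewrite orbit_reflect by exact Hdigit. assert (H := Horbit n). lra. }
  replace (IZR Lz - 1) with (- (IZR (- Lz) + 1)) by (rewrite opp_IZR; ring).
  apply (dini_reflect T (takagi_even T HT)).
  apply (lower_left_dini_from_band T HT (- k - 1) (complement_digits a) (- x)
           (complement_digits_01 a Hdigit) Horbit' (- Lz) N).
  - intros n Hn. rewrite slope_reflect by exact Hdigit. assert (H := Hband n Hn). lia.
  - intros M. destruct (Htop_often M) as [n [Hn HWn]]. exists n.
    rewrite slope_reflect by exact Hdigit. split; [exact Hn|lia].
Qed.

Fixpoint binary_partial (a : nat -> nat) (n : nat) : R :=
  match n with
  | O => 0
  | S m => binary_partial a m + INR (a (S m)) / 2 ^ S m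
  end.

Lemma binary_floor_partial (k : Z) (a : nat -> nat) (n : nat) :
  IZR (binary_floor k a n) = 2 ^ n * (IZR k + binary_partial a n).
Proof.
  induction n as [|n IH]; [simpl; ring|]. cbn [binary_floor binary_partial].
  rewrite plus_IZR, mult_IZR, IH, <- INR_IZR_INZ. simpl pow.
  assert (0 < 2 ^ n) by (apply pow_lt; lra). field. lra.
Qed.

Lemma binary_partial_sum (a : nat -> nat) (M : nat) :
  sum_f_R0 (fun n => INR (a (S n)) / 2 ^ S n) M = binary_partial a (S M).
Proof.
  induction M as [|M IH]; [simpl; ring|].
  change (sum_f_R0 (fun n => INR (a (S n)) / 2 ^ S n) M + INR (a (S (S M))) / 2 ^ S (S M)
    = binary_partial a (S (S M))). rewrite IH. reflexivity.
Qed.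

Lemma binary_partial_tail (a : nat -> nat)
  (Hdigit : forall n, a (S n) = 0%nat \/ a (S n) = 1%nat) (n j : nat) :
  binary_partial a n <= binary_partial a (n + j) <= binary_partial a n + / 2 ^ n - / 2 ^ (n + j).
Proof.
  induction j as [|j IH]; [rewrite Nat.add_0_r; lra|].
  replace (n + S j)%nat with (S (n + j)) by lia. cbn [binary_partial].
  assert (Hp : 0 < 2 ^ (n + j)) by (apply pow_lt; lra).
  assert (Hd : 0 <= INR (a (S (n + j))) <= 1)
    by (destruct (Hdigit (n + j)%nat) as [-> | ->]; simpl; lra).
  assert (E : / 2 ^ (n + j) - / 2 ^ S (n + j) = 1 / 2 ^ S (n + j)) by (simpl; field; lra).
  assert (Hq : 0 <= INR (a (S (n + j))) / 2 ^ S (n + j) <= 1 / 2 ^ S (n + j)).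
  { simpl pow. split; apply Rmult_le_compat_r || apply Rmult_le_pos; try lra;
      left; apply Rinv_0_lt_compat; lra. }
  lra.
Qed.

(* For x outside the dyadic rationals, each X_n = 2^n x - p_n lies strictly
   inside (0,1): the closed bounds come from the expansion, and equality would
   make x = p_n / 2^n or (p_n + 1) / 2^n dyadic. *)
Lemma orbit_in_open_unit (x : R) (k : Z) (a : nat -> nat)
  (Hdigit : forall n, a (S n) = 0%nat \/ a (S n) = 1%nat)
  (Hexp : infinite_sum (fun n => INR (a (S n)) / 2 ^ S n) (x - IZR k))
  (HxD : ~ in_Dall x) (n : nat) :
  0 < orbit k a x n < 1.
Proof.
  assert (Hp : 0 < 2 ^ n) by (apply pow_lt; lra).
  assert (Hb : binary_partial a n <= x - IZR k <= binary_partial a n + / 2 ^ n).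
  { apply (infinite_sum_bounds _ _ _ _ n Hexp). intros M HM.
    rewrite binary_partial_sum. replace (S M) with (n + (S M - n))%nat by lia.
    assert (B := binary_partial_tail a Hdigit n (S M - n)).
    assert (0 < / 2 ^ (n + (S M - n))) by (apply Rinv_0_lt_compat, pow_lt; lra). lra. }
  assert (E : orbit k a x n = 2 ^ n * (x - IZR k - binary_partial a n))
    by (unfold orbit; rewrite binary_floor_partial; ring).
  assert (Hclosed : 0 <= orbit k a x n <= 1).
  { rewrite E. split; [apply Rmult_le_pos; lra|].
    replace 1 with (2 ^ n * / 2 ^ n) by (field; lra). apply Rmult_le_compat_l; lra. }
  assert (Hnot_dyadic : forall m : Z, orbit k a x n <> IZR m - IZR (binary_floor k a n)).
  { intros m Hm. apply HxD. exists (S n). split; [lia|]. exists m.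
    replace (S n - 1)%nat with n by lia. unfold orbit in Hm. field_simplify_eq; [|lra]. lra. }
  assert (H0 := Hnot_dyadic (binary_floor k a n)).
  assert (H1 := Hnot_dyadic (binary_floor k a n + 1)%Z). rewrite plus_IZR in H1.
  split.
  - destruct (Rle_lt_or_eq_dec _ _ (proj1 Hclosed)) as [Hlt|Heq]; [exact Hlt|].
    exfalso. apply H0. rewrite <- Heq. ring.
  - destruct (Rle_lt_or_eq_dec _ _ (proj2 Hclosed)) as [Hlt|Heq]; [exact Hlt|].
    exfalso. apply H1. rewrite Heq. simpl IZR. ring.
Qed.

Lemma derivable_of_locally_affine (f : R -> R) (x c : R) :
  (exists delta, 0 < delta /\ forall h, Rabs h < delta -> f (x + h) - f x = c * h) ->
  derivable_pt_lim f x c.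
Proof.
  intros [delta [Hd H]] eps Heps. exists (mkposreal delta Hd). intros h Hh0 Hh. simpl in Hh.
  rewrite H by exact Hh. replace (c * h / h - c) with 0 by (field; exact Hh0).
  rewrite Rabs_R0. exact Heps.
Qed.

Section Derivatives.

Variables (k : Z) (a : nat -> nat) (x : R).
Hypothesis Hdigit : forall n, a (S n) = 0%nat \/ a (S n) = 1%nat.
Hypothesis Horbit : forall n, 0 < orbit k a x n < 1.

(* g_{i+1}(y) = phi(Y_i) / 2^i is affine with slope 1 - 2 a_{i+1} near x,
   as long as Y_{i+1} stays in (0,1). *)
Lemma g_derivative (i : nat) : derivable_pt_lim (g (S i)) x (1 - 2 * INR (a (S i))).
Proof.
  apply derivable_of_locally_affine.
  set (X := orbit k a x (S i)).
  assert (HX : 0 < X < 1) by apply Horbit.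
  assert (Hp : 0 < 2 ^ S i) by (apply pow_lt; lra).
  assert (Hg : forall y, g (S i) y = phi (orbit k a y i) / 2 ^ i).
  { intros y. unfold g, orbit. replace (S i - 1)%nat with i by lia.
    rewrite <- (phi_shift_int (2 ^ i * y - IZR (binary_floor k a i)) (binary_floor k a i)).
    f_equal. f_equal. ring. }
  exists (Rmin X (1 - X) / 2 ^ S i). split.
  { apply Rdiv_lt_0_compat; [apply Rmin_glb_lt; lra|exact Hp]. }
  intros h Hh.
  assert (Hsmall : Rabs (2 ^ S i * h) < Rmin X (1 - X)).
  { rewrite Rabs_mult, (Rabs_right (2 ^ S i)) by lra.
    apply (Rmult_lt_compat_l (2 ^ S i)) in Hh; [|exact Hp].
    replace (2 ^ S i * (Rmin X (1 - X) / 2 ^ S i)) with (Rmin X (1 - X)) in Hh by (field; lra).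
    exact Hh. }
  assert (M1 := Rmin_l X (1 - X)). assert (M2 := Rmin_r X (1 - X)).
  apply Rabs_def2 in Hsmall.
  assert (Hstep : forall y, 2 * orbit k a y i - INR (a (S i)) = orbit k a y (S i))
    by (intros; rewrite orbit_step; ring).
  rewrite !Hg, !(phi_digit _ _ (Hdigit i)).
  - rewrite orbit_translate. field. apply pow_nonzero. lra.
  - rewrite Hstep. unfold X in HX. lra.
  - rewrite Hstep, orbit_translate. unfold X in *. lra.
Qed.

Lemma G_derivative (n : nat) : derivable_pt_lim (G n) x (IZR (slope a n)).
Proof.
  induction n as [|n IH]; [apply derivable_pt_lim_const|].
  rewrite slope_step_real. apply derivable_pt_lim_plus; [exact IH|apply g_derivative].
Qed.

End Derivatives.

Lemma liminf_integer_seq (d : nat -> R) (W : nat -> Z) (l : R) :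
  (forall n, (1 <= n)%nat -> d n = IZR (W n)) -> is_liminf_seq d l ->
  exists lz N, l = IZR lz /\ (forall n, (N <= n)%nat -> (lz <= W n)%Z) /\
    (forall M, exists n, (M <= n)%nat /\ W n = lz).
Proof.
  intros Hd [H1 H2].
  destruct (H1 (1 / 2) ltac:(lra)) as [N1 HN1].
  destruct (H2 (1 / 2) ltac:(lra) (max N1 1)) as [n0 [Hn0 Hn0']].
  set (lz := W n0).
  assert (Hl0 : IZR lz < l + 1 / 2 /\ IZR lz > l - 1 / 2).
  { unfold lz. rewrite <- Hd by lia. split; [exact Hn0'|apply HN1; lia]. }
  assert (Hge : forall n, (max N1 1 <= n)%nat -> (lz <= W n)%Z).
  { intros n Hn. assert (A := HN1 n ltac:(lia)). rewrite Hd in A by lia.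
    assert (H : IZR (lz - 1) < IZR (W n)) by (rewrite minus_IZR; simpl; lra).
    apply lt_IZR in H. lia. }
  assert (Hio : forall M, exists n, (M <= n)%nat /\ W n = lz).
  { intros M. destruct (H2 (1 / 2) ltac:(lra) (max M (max N1 1))) as [n [Hn Hn']].
    exists n. split; [lia|]. rewrite Hd in Hn' by lia.
    assert (H : IZR (W n) < IZR (lz + 1)) by (rewrite plus_IZR; simpl; lra).
    apply lt_IZR in H. assert (B := Hge n ltac:(lia)). lia. }
  exists lz, (max N1 1). split; [|split; [exact Hge|exact Hio]].
  apply Rle_antisym.
  - destruct (Rle_dec l (IZR lz)) as [|Hn]; [assumption|]. exfalso.
    destruct (H1 (l - IZR lz) ltac:(lra)) as [N2 HN2].
    destruct (Hio (max N2 1)) as [n [Hn1 Hn2]].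
    assert (A := HN2 n ltac:(lia)). rewrite Hd, Hn2 in A by lia. lra.
  - destruct (Rle_dec (IZR lz) l) as [|Hn]; [assumption|]. exfalso.
    destruct (H2 (IZR lz - l) ltac:(lra) (max N1 1)) as [n [Hn1 Hn2]].
    rewrite Hd in Hn2 by lia. assert (B := Hge n Hn1). apply IZR_le in B. lra.
Qed.

Lemma limsup_integer_seq (d : nat -> R) (W : nat -> Z) (L : R) :
  (forall n, (1 <= n)%nat -> d n = IZR (W n)) -> is_limsup_seq d L ->
  exists Lz N, L = IZR Lz /\ (forall n, (N <= n)%nat -> (W n <= Lz)%Z) /\
    (forall M, exists n, (M <= n)%nat /\ W n = Lz).
Proof.
  intros Hd [H1 H2].
  destruct (liminf_integer_seq (fun n => - d n) (fun n => (- W n)%Z) (- L))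
    as [lz [N [E [Hb Hio]]]].
  - intros n Hn. rewrite opp_IZR, Hd by exact Hn. reflexivity.
  - split.
    + intros eps Heps. destruct (H1 eps Heps) as [N HN]. exists N. intros n Hn.
      assert (A := HN n Hn). lra.
    + intros eps Heps N. destruct (H2 eps Heps N) as [n [Hn A]]. exists n. split; [exact Hn|lra].
  - exists (- lz)%Z, N. split; [rewrite opp_IZR; lra|]. split.
    + intros n Hn. assert (A := Hb n Hn). lia.
    + intros M. destruct (Hio M) as [n [Hn A]]. exists n. split; [exact Hn|lia].
Qed.

Theorem proposition2p5
  (T : R -> R)
  (HT : forall y : R, infinite_sum (takagi_term y) (T y))
  (x : R) (HxD : ~ in_Dall x)
  (k : Z) (a : nat -> nat)
  (Ha01 : forall n, (1 <= n)%nat -> a n = 0%nat \/ a n = 1%nat)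
  (Hexp : infinite_sum (fun n => INR (a (S n)) / 2 ^ (S n)) (x - IZR k))
  (d : nat -> R)
  (Hd : forall n, (1 <= n)%nat -> derivable_pt_lim (G n) x (d n))
  (l L : R)
  (Hl : is_liminf_seq d l) (HL : is_limsup_seq d L)
  (Hgap : L - l = 1 \/ L - l = 2) :
  (exists m : nat, (1 <= m)%nat /\
     forall i : nat, (a (m + 2 * i) + a (m + 2 * i + 1))%nat = 1%nat) /\
  is_lower_left_dini T x (l + 1) /\
  is_upper_right_dini T x (L - 1).
Proof.
  assert (Hdigit : forall n, a (S n) = 0%nat \/ a (S n) = 1%nat) by (intros; apply Ha01; lia).
  assert (Horbit := orbit_in_open_unit x k a Hdigit Hexp HxD).
  assert (HdW : forall n, (1 <= n)%nat -> d n = IZR (slope a n)).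
  { intros n Hn. exact (uniqueness_limite _ _ _ _ (Hd n Hn) (G_derivative k a x Hdigit Horbit n)). }
  destruct (liminf_integer_seq d (slope a) l HdW Hl) as [lz [N1 [El [Hlow Hlow_often]]]].
  destruct (limsup_integer_seq d (slope a) L HdW HL) as [Lz [N2 [EL [Hhigh Hhigh_often]]]].
  assert (Hgap' : (Lz = lz + 1)%Z \/ (Lz = lz + 2)%Z).
  { subst l L. destruct Hgap as [E|E]; [left|right]; apply eq_IZR;
      rewrite plus_IZR; simpl IZR; lra. }
  assert (Hband : forall n, (max N1 N2 <= n)%nat -> (lz <= slope a n <= lz + 2)%Z).
  { intros n Hn. assert (A := Hlow n ltac:(lia)). assert (B := Hhigh n ltac:(lia)). lia. }
  split; [|split].
  - exact (digits_eventually_alternate a Hdigit lz _ Hband Hlow_often).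
  - rewrite El. exact (lower_left_dini_from_band T HT k a x Hdigit Horbit lz _ Hband Hlow_often).
  - rewrite EL. apply (upper_right_dini_from_band T HT k a x Hdigit Horbit Lz (max N1 N2)).
    + intros n Hn. assert (A := Hlow n ltac:(lia)). assert (B := Hhigh n ltac:(lia)). lia.
    + exact Hhigh_often.
Qed.
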